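(* Let $X$ be a locally convex topological space, and let $C_0(X)$ be the Banach space (with norm $\|f\|_{C_0(X)}=\max_{x\in X}|f(x)|$) of continuous $f:X\to\mathbb{R}$ such that $\{x\in X:|f(x)|>\varepsilon\}$ is compact for every $\varepsilon>0$. Let $\mathcal{M}(X)$ be the space of signed Borel measures on $X$ of bounded total variation, with total variation norm $\|\mu\|$. Let $K:X\times X\to\mathbb{R}$ satisfy $K(\cdot,x)\in C_0(X)$ for all $x\in X$ and $$\overline{\mathrm{span}}\{K(\cdot,x):x\in X\}=C_0(X)$$ (closure in $C_0(X)$). Define $$\mathcal{B}:=\Big\{f_\mu:=\int_X K(t,\cdot)\,d\mu(t):\ \mu\in\mathcal{M}(X)\Big\},\qquad \|f_\mu\|_{\mathcal{B}}:=\|\mu\|.$$ Then $\mathcal{B}$ is a pre-RKBS on $X$; that is, $\|\cdot\|_{\mathcal B}$ is well defined and $\mathcal{B}$ is a Banach space of functions on $X$ on which all point evaluation functionals are continuous, and for $f\in\mathcal{B}$, $\|f\|_{\mathcal B}=0$ if and only if $f$ vanishes everywhere on $X$.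
   Context: Standing assumptions of the paper for this setting: the dual of $C_0(X)$ is identified isometrically with $\mathcal{M}(X)$ via $T(f)=\int_X f\,d\mu$ with operator norm equal to $\|\mu\|$; and for all pairwise distinct $x_1,\dots,x_m\in X$ the matrix $K[{\bf x}]$ with entries $(K[{\bf x}])_{j,k}=K(x_k,x_j)$ is nonsingular. *)

From HB Require Import structures.
From mathcomp Require Import all_boot all_order all_algebra.
From mathcomp Require Import all_classical all_reals all_analysis.

Set Implicit Arguments.
Unset Strict Implicit.
Unset Printing Implicit Defensive.

Import Order.TTheory GRing.Theory Num.Theory.
Import numFieldNormedType.Exports.
Local Open Scope classical_set_scope.
Local Open Scope ring_scope.

(* A (locally convex) tvs is nonempty (it contains 0); we equip an alias of
   its carrier with the point 0 so that the Borel sigma-algebra can be built. *)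
Definition tvs_pt (R : realType) (X : tvsType R) : Type := X.
HB.instance Definition _ (R : realType) (X : tvsType R) :=
  Choice.on (tvs_pt X).
HB.instance Definition _ (R : realType) (X : tvsType R) :=
  isPointed.Build (tvs_pt X) (0 : X).

Definition borelT (R : realType) (X : tvsType R) :=
  g_sigma_algebraType (@open X : set (set (tvs_pt X))).

(* M(X): signed (finite, real-valued, hence bounded-variation) Borel measures. *)
Notation signed_measure X R := (charge (borelT X) R).

Section signed_measures.
Context (R : realType) (X : tvsType R).
Local Notation T := (borelT X).

Definition hahnP (nu : signed_measure X R) : set T :=
  projT1 (cid (Hahn_decomposition nu)).
Definition hahnN (nu : signed_measure X R) : set T :=
  projT1 (cid (projT2 (cid (Hahn_decomposition nu)))).
Lemma hahnPN (nu : signed_measure X R) :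
  hahn_decomposition nu (hahnP nu) (hahnN nu).
Proof. exact: (projT2 (cid (projT2 (cid (Hahn_decomposition nu))))). Qed.

Definition tvnorm (nu : signed_measure X R) : R :=
  fine (charge_variation (hahnPN nu) setT).

Definition cintegral (nu : signed_measure X R) (g : X -> R) : R :=
  fine ((\int[jordan_pos (hahnPN nu)]_(t in [set: T]) (g t)%:E)
        - (\int[jordan_neg (hahnPN nu)]_(t in [set: T]) (g t)%:E))%E.

Definition C0 (g : X -> R) : Prop :=
  continuous g /\ forall e : R, 0 < e -> compact [set x | e < `|g x|].

Definition supnorm (g : X -> R) : R := sup [set `|g x| | x in [set: X]].

Definition fmu (K : X -> X -> R) (nu : signed_measure X R) : X -> R :=
  fun x => cintegral nu (fun t => K t x).

Definition inB (K : X -> X -> R) (f : X -> R) : Prop :=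
  exists nu : signed_measure X R, f = fmu K nu.

(* ||f||_B := ||mu|| for a (chosen) mu with f = f_mu; 0 outside B *)
Definition normB (K : X -> X -> R) (f : X -> R) : R :=
  match pselect (inB K f) with
  | left h => tvnorm (projT1 (cid h))
  | right _ => 0
  end.

End signed_measures.

From HB Require Import structures.
From mathcomp Require Import all_boot all_order all_algebra.
From mathcomp Require Import all_classical all_reals all_analysis.
From mathcomp Require Import ring lra.
Set Implicit Arguments.
Unset Strict Implicit.
Unset Printing Implicit Defensive.

Import Order.TTheory GRing.Theory Num.Theory.
Import numFieldNormedType.Exports.
Local Open Scope classical_set_scope.
Local Open Scope ring_scope.

(* The map mu |-> f_mu factors through the functional g |-> int g dmu on
   C_0(X): f_mu(x) is its value at K(., x), and these values determine it
   because span {K(., x)} is dense.  As mu |-> int . dmu is an isometric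
   isomorphism M(X) -> C_0(X)^*, ||f_mu||_B is the dual norm of that
   functional; this makes it well defined, and the linear structure, the
   completeness and the bound |f(x)| <= ||K(., x)||_oo ||f||_B of B are
   inherited from the Banach space C_0(X)^*. *)

Section bounded_measurable.
Context {R : realType} {X : tvsType R}.
Local Notation T := (borelT X).

Lemma continuous_measurable_fun (g : X -> R) :
  continuous g -> measurable_fun [set: T] (g : T -> R).
Proof.
move=> /continuousP cg.
apply: (measurability _ (measurable_realfun.RGenOpens.measurableE R)).
move=> _ [_ [a [b ->] <-]]; rewrite setTI; apply: sub_sigma_algebra.
exact/cg/interval_open.
Qed.

Definition bounded_measurable (g : X -> R) :=
  measurable_fun [set: T] (g : T -> R) /\ exists M, forall t, `|g t| <= M.

Lemma C0_bounded_measurable g : C0 g -> bounded_measurable g.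
Proof.
move=> [cg cpt]; split; first exact: continuous_measurable_fun.
have [M [_ HM]] := compact_bounded
  (continuous_compact (continuous_subspaceT cg) (cpt 1 ltr01)).
exists (`|M| + 1) => t; have [gt1|] := ltP 1 `|g t|; last first.
  by move/le_trans; apply; rewrite lerDr.
apply: (HM (`|M| + 1)); last by exists t.
by rewrite (le_lt_trans (ler_norm M)) ?ltrDl.
Qed.

Lemma bounded_measurable_cst c : bounded_measurable (fun _ => c).
Proof. by split; [exact: measurable_cst | exists `|c|]. Qed.

Lemma bounded_measurable_lin a g h : bounded_measurable g ->
  bounded_measurable h -> bounded_measurable (fun t => a * g t + h t).
Proof.
move=> [mg [Mg Hg]] [mh [Mh Hh]]; split.
  by apply: measurable_realfun.measurable_funD => //;
     apply: measurable_realfun.measurable_funM.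
exists (`|a| * Mg + Mh) => t; rewrite (le_trans (ler_normD _ _))// lerD//.
by rewrite normrM ler_wpM2l.
Qed.

Lemma bounded_measurable_scale a g :
  bounded_measurable g -> bounded_measurable (fun t => a * g t).
Proof.
move=> /(bounded_measurable_lin a)/(_ (bounded_measurable_cst 0)).
by under eq_fun do rewrite addr0.
Qed.

Lemma bounded_measurable_norm g :
  bounded_measurable g -> bounded_measurable (fun t => `|g t|).
Proof.
move=> [mg [M HM]]; split; first exact: measurableT_comp.
by exists M => t; rewrite normr_id.
Qed.

Lemma bounded_measurable_sum (I : Type) (r : seq I) (F : I -> X -> R) :
  (forall i, bounded_measurable (F i)) ->
  bounded_measurable (fun t => \sum_(i <- r) F i t).
Proof.
move=> HF; elim: r => [|i r IH].
  by under eq_fun do rewrite big_nil; exact: bounded_measurable_cst.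
under eq_fun do rewrite big_cons -[F i _]mul1r.
exact: bounded_measurable_lin.
Qed.

Lemma bounded_measurable_integrable (mu : {finite_measure set T -> \bar R}) g :
  bounded_measurable g -> mu.-integrable [set: T] (EFin \o (g : T -> R)).
Proof.
move=> [mg [M HM]]; apply: measurable_bounded_integrable => //.
  by rewrite -ge0_fin_numE// fin_num_measure.
exists M; split; first by rewrite num_real.
by move=> y My t _ /=; rewrite (le_trans (HM t))// ltW.
Qed.

Lemma le_normr_Rintegral_bound (mu : {finite_measure set T -> \bar R}) g M :
  bounded_measurable g -> (forall t, `|g t| <= M) ->
  `|Rintegral mu [set: T] g| <= M * fine (mu [set: T]).
Proof.
move=> bg HM; rewrite (le_trans (le_normr_Rintegral _ _))//.
  exact: bounded_measurable_integrable.
rewrite -Rintegral_cst//; apply: le_Rintegral => //.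
- exact/bounded_measurable_integrable/bounded_measurable_norm.
- exact/bounded_measurable_integrable/bounded_measurable_cst.
Qed.

Lemma supnorm_ge_norm (g : X -> R) M :
  (forall t, `|g t| <= M) -> forall t, `|g t| <= supnorm g.
Proof.
move=> HM t; apply: sup_upper_bound; last by exists t.
split; first by exists `|g t|, t.
by exists M => _ [x _ <-].
Qed.

Lemma supnorm_le (g : X -> R) e : (forall t, `|g t| <= e) -> supnorm g <= e.
Proof.
move=> He; apply: ge_sup; first by exists `|g 0|, 0.
by move=> _ [x _ <-].
Qed.

Lemma supnorm_ge0 (g : X -> R) : bounded_measurable g -> 0 <= supnorm g.
Proof.
by move=> [_ [M /supnorm_ge_norm HM]]; exact: le_trans (normr_ge0 _) (HM 0).
Qed.

Lemma C0_cst0 : C0 (fun _ : X => 0 : R).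
Proof.
split=> [x|e e_gt0]; first exact: cvg_cst.
suff -> : [set x : X | e < `|0 : R|] = set0 by exact: compact0.
by apply/seteqP; split=> x //=; rewrite normr0 ltNge ltW.
Qed.

End bounded_measurable.

Section cintegral.
Context {R : realType} {X : tvsType R}.
Local Notation T := (borelT X).
Local Notation mupos mu := (jordan_pos (hahnPN mu)).
Local Notation muneg mu := (jordan_neg (hahnPN mu)).

Lemma cintegralE (mu : signed_measure X R) g : bounded_measurable g ->
  cintegral mu g = Rintegral (mupos mu) [set: T] g - Rintegral (muneg mu) [set: T] g.
Proof.
move=> bg; rewrite /cintegral /Rintegral fineB //;
exact: (integrable_fin_num measurableT (bounded_measurable_integrable _ bg)).
Qed.

Lemma tvnormE (mu : signed_measure X R) :
  tvnorm mu = fine (mupos mu [set: T]) + fine (muneg mu [set: T]).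
Proof. by rewrite /tvnorm /charge_variation /= fineD ?fin_num_measure. Qed.

Lemma tvnorm_ge0 (mu : signed_measure X R) : 0 <= tvnorm mu.
Proof. by rewrite tvnormE addr_ge0 // fine_ge0 // measure_ge0. Qed.

Definition bm_linear (D : (X -> R) -> R) := forall a g h,
  bounded_measurable g -> bounded_measurable h ->
  D (fun t => a * g t + h t) = a * D g + D h.

Lemma bm_linear0 D : bm_linear D -> D (fun _ => 0) = 0.
Proof.
move=> Dlin; have := Dlin 1 _ _ (bounded_measurable_cst 0) (bounded_measurable_cst 0).
under eq_fun do rewrite mulr0 addr0.
by rewrite mul1r -{1}[D _]addr0 => /addrI.
Qed.

Lemma bm_linearZ D a g : bm_linear D -> bounded_measurable g ->
  D (fun t => a * g t) = a * D g.
Proof.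
move=> Dlin bg; have := Dlin a _ _ bg (bounded_measurable_cst 0).
by rewrite bm_linear0 // addr0; under eq_fun do rewrite addr0.
Qed.

Lemma bm_linear_sum D (I : Type) (r : seq I) (F : I -> X -> R) :
  bm_linear D -> (forall i, bounded_measurable (F i)) ->
  D (fun t => \sum_(i <- r) F i t) = \sum_(i <- r) D (F i).
Proof.
move=> Dlin HF; elim: r => [|i r IH].
  by under eq_fun do rewrite big_nil; rewrite big_nil bm_linear0.
under eq_fun do rewrite big_cons -[F i _]mul1r.
by rewrite Dlin ?mul1r ?IH ?big_cons //; exact: bounded_measurable_sum.
Qed.

Lemma cintegral_lin (mu : signed_measure X R) : bm_linear (cintegral mu).
Proof.
move=> a g h bg bh; rewrite !cintegralE //; last exact: bounded_measurable_lin.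
rewrite !RintegralD ?RintegralZl //; first ring.
all: apply: bounded_measurable_integrable => //; exact: bounded_measurable_scale.
Qed.

Lemma cintegral_le (mu : signed_measure X R) g : bounded_measurable g ->
  `|cintegral mu g| <= supnorm g * tvnorm mu.
Proof.
move=> bg; have [_ [M /supnorm_ge_norm HM]] := bg.
rewrite cintegralE // (le_trans (ler_normB _ _))// tvnormE mulrDr.
by rewrite lerD // le_normr_Rintegral_bound.
Qed.

End cintegral.

Lemma cvg_norm_le {R : realType} (a : nat -> R) l c N : a @ \oo --> l ->
  (forall n, (N <= n)%N -> `|a n| <= c) -> `|l| <= c.
Proof.
move=> a_l le_c; rewrite -(cvg_lim _ (cvg_norm a_l)) //.
apply: limr_le; last by exists N => // n /le_c.
by apply/cvg_ex; eexists; exact: cvg_norm a_l.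
Qed.

Lemma cvg_cauchy_le {R : realType} (a : nat -> R) :
  (forall e, 0 < e -> exists N, forall n m, (N <= n)%N -> (N <= m)%N ->
    `|a n - a m| <= e) -> cvg (a @ \oo).
Proof.
move=> a_cauchy; apply/cauchy_cvgP/cauchy_exP => e e_gt0.
have [N le_e2] := a_cauchy _ (divr_gt0 e_gt0 (ltr0Sn _ 1)).
exists (a N), N => // n Nn; rewrite /ball /=.
by apply: le_lt_trans (le_e2 N n (leqnn N) Nn) _; lra.
Qed.

Section kernel.
Context {R : realType} {X : tvsType R} (K : X -> X -> R).
Hypothesis KC0 : forall x, C0 (fun t => K t x).
Hypothesis Kdense : forall g, C0 g -> forall e : R, 0 < e ->
  exists (n : nat) (c : 'I_n -> R) (xs : 'I_n -> X),
    supnorm (fun t => g t - \sum_(i < n) c i * K t (xs i)) <= e.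
Hypothesis Riesz_surj : forall T : (X -> R) -> R,
  (forall a g h, C0 g -> C0 h -> T (fun t => a * g t + h t) = a * T g + T h) ->
  (exists C : R, forall g, C0 g -> `|T g| <= C * supnorm g) ->
  exists mu : signed_measure X R, forall g, C0 g -> T g = cintegral mu g.
Hypothesis Riesz_isom : forall mu : signed_measure X R,
  sup [set `|cintegral mu g| | g in [set g | C0 g /\ supnorm g <= 1]] = tvnorm mu.

Lemma bm_linear_kernel_eq0 (D : (X -> R) -> R) (C : R) : 0 <= C -> bm_linear D ->
  (forall g, bounded_measurable g -> `|D g| <= supnorm g * C) ->
  (forall x, D (fun t => K t x) = 0) -> forall g, C0 g -> D g = 0.
Proof.
move=> C_ge0 Dlin Dle DK g Cg; apply/eqP; rewrite -normr_le0.
apply/ler_addgt0Pr => e e_gt0; rewrite add0r.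
have eC_gt0 : 0 < e / (C + 1) by rewrite divr_gt0 // ltr_wpDl.
have [n [c [xs gs_le]]] := Kdense Cg eC_gt0.
pose s t := \sum_(i < n) c i * K t (xs i).
have bK i : bounded_measurable (fun t => K t (xs i)).
  exact: C0_bounded_measurable.
have bcK i : bounded_measurable (fun t => c i * K t (xs i)).
  exact: bounded_measurable_scale.
have bs : bounded_measurable s by exact: bounded_measurable_sum.
have Ds : D s = 0.
  by rewrite /s bm_linear_sum // big1 // => i _; rewrite bm_linearZ // DK mulr0.
have bgs : bounded_measurable (fun t => g t - s t).
  under eq_fun do rewrite -mulN1r addrC.
  by apply: bounded_measurable_lin => //; exact: C0_bounded_measurable.
have -> : g = (fun t => 1 * (g t - s t) + s t).
  by apply: funext => t; rewrite mul1r subrK.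
rewrite Dlin ?Ds ?addr0 ?mul1r //.
rewrite (le_trans (Dle _ bgs)) // (le_trans (ler_wpM2r C_ge0 gs_le)) //.
rewrite mulrAC ler_pdivrMr ?ltr_wpDl // ler_wpM2l ?ltW //; lra.
Qed.

Lemma cintegral_eq_of_fmu (mu nu : signed_measure X R) : fmu K mu = fmu K nu ->
  forall g, C0 g -> cintegral mu g = cintegral nu g.
Proof.
move=> fmu_eq g Cg; apply/eqP; rewrite -subr_eq0; apply/eqP.
pose D g := cintegral mu g - cintegral nu g.
apply: (bm_linear_kernel_eq0 (C := tvnorm mu + tvnorm nu) (D := D)) => //.
- by rewrite addr_ge0 ?tvnorm_ge0.
- by move=> a g1 g2 bg1 bg2; rewrite /D !cintegral_lin //; ring.
- move=> g1 bg1; rewrite /D (le_trans (ler_normB _ _)) // mulrDr.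
  by rewrite lerD ?cintegral_le.
- by move=> x; rewrite /D -/(fmu K mu x) -/(fmu K nu x) fmu_eq subrr.
Qed.

Lemma tvnorm_le (mu : signed_measure X R) c :
  (forall g, C0 g -> supnorm g <= 1 -> `|cintegral mu g| <= c) -> tvnorm mu <= c.
Proof.
move=> le_c; rewrite -Riesz_isom; apply: ge_sup => [|_ [g [Cg g1] <-]].
  exists `|cintegral mu (fun _ => 0)|, (fun _ => 0); split => //; first exact: C0_cst0.
  by apply: supnorm_le => t; rewrite normr0.
exact: le_c.
Qed.

Lemma cintegral_le_tvnorm (mu : signed_measure X R) g : C0 g -> supnorm g <= 1 ->
  `|cintegral mu g| <= tvnorm mu.
Proof.
move=> /C0_bounded_measurable bg g1.
by rewrite (le_trans (cintegral_le _ bg)) // ler_piMl ?tvnorm_ge0.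
Qed.

Lemma charge_lincomb (mu nu : signed_measure X R) (a : R) :
  exists rho : signed_measure X R,
    fmu K rho = (fun x => a * fmu K mu x + fmu K nu x) /\
    forall g, C0 g -> cintegral rho g = a * cintegral mu g + cintegral nu g.
Proof.
have [rho rhoE] : exists rho : signed_measure X R,
    forall g, C0 g -> a * cintegral mu g + cintegral nu g = cintegral rho g.
  apply: Riesz_surj => [b g h /C0_bounded_measurable bg /C0_bounded_measurable bh|].
    by rewrite !cintegral_lin //; ring.
  exists (`|a| * tvnorm mu + tvnorm nu) => g /C0_bounded_measurable bg.
  rewrite (le_trans (ler_normD _ _)) // normrM mulrDl -mulrA.
  by rewrite lerD ?ler_wpM2l // mulrC cintegral_le.
exists rho; split=> [|g Cg]; last by rewrite -rhoE.
by apply: funext => x; rewrite /fmu -rhoE.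
Qed.

Lemma tvnorm_fmu_eq (mu nu : signed_measure X R) :
  fmu K mu = fmu K nu -> tvnorm mu = tvnorm nu.
Proof.
move=> fmu_eq; have cE := cintegral_eq_of_fmu fmu_eq.
apply/eqP; rewrite eq_le; apply/andP; split; apply: tvnorm_le => g Cg g1.
  by rewrite cE // cintegral_le_tvnorm.
by rewrite -cE // cintegral_le_tvnorm.
Qed.

Lemma normB_fmu (mu : signed_measure X R) : normB K (fmu K mu) = tvnorm mu.
Proof.
rewrite /normB; case: pselect => [h|[]]; last by exists mu.
by apply: tvnorm_fmu_eq; rewrite -(projT2 (cid h)).
Qed.

Lemma normB_ge0 f : 0 <= normB K f.
Proof. by rewrite /normB; case: pselect => // h; exact: tvnorm_ge0. Qed.

Lemma inB_lin a f g : inB K f -> inB K g -> inB K (fun x => a * f x + g x).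
Proof.
by move=> [mu ->] [nu ->]; have [rho [<- _]] := charge_lincomb mu nu a; exists rho.
Qed.

Lemma inB0 : inB K (fun _ => 0).
Proof.
have : inB K (fun x => -1 * fmu K czero x + fmu K czero x).
  by apply: inB_lin; exists czero.
by under eq_fun do rewrite mulN1r addNr.
Qed.

Lemma normBD f g : inB K f -> inB K g ->
  normB K (fun x => f x + g x) <= normB K f + normB K g.
Proof.
move=> [mu ->] [nu ->]; have [rho [fmu_rho cint_rho]] := charge_lincomb mu nu 1.
under eq_fun do rewrite -[fmu K mu _]mul1r.
rewrite -fmu_rho !normB_fmu; apply: tvnorm_le => h Ch h1.
rewrite cint_rho // mul1r (le_trans (ler_normD _ _)) //.
by rewrite lerD // cintegral_le_tvnorm.
Qed.

Lemma normBZ_le a f : inB K f -> normB K (fun x => a * f x) <= `|a| * normB K f.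
Proof.
move=> [mu ->]; have [rho [fmu_rho cint_rho]] := charge_lincomb mu mu (a - 1).
have -> : (fun x => a * fmu K mu x) = fmu K rho.
  by rewrite fmu_rho; apply: funext => x; ring.
rewrite !normB_fmu; apply: tvnorm_le => g Cg g1.
have -> : cintegral rho g = a * cintegral mu g by rewrite cint_rho //; ring.
by rewrite normrM ler_wpM2l // cintegral_le_tvnorm.
Qed.

Lemma normBZ a f : inB K f -> normB K (fun x => a * f x) = `|a| * normB K f.
Proof.
move=> Bf; apply/eqP; rewrite eq_le normBZ_le //=.
have [->|a_neq0] := eqVneq a 0; first by rewrite normr0 mul0r normB_ge0.
have Baf : inB K (fun x => a * f x).
  by have := inB_lin a Bf inB0; under eq_fun do rewrite addr0.
have := normBZ_le a^-1 Baf.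
have -> : (fun x => a^-1 * (a * f x)) = f.
  by apply: funext => x; rewrite mulrA mulVf ?mul1r.
by rewrite normrV ?unitfE // ler_pdivlMl ?normr_gt0.
Qed.

Lemma normB_eval_le f x : inB K f -> `|f x| <= supnorm (fun t => K t x) * normB K f.
Proof.
by move=> [mu ->]; rewrite normB_fmu; exact/cintegral_le/C0_bounded_measurable.
Qed.

Lemma normB_eq0 f : inB K f -> (normB K f = 0 <-> forall x, f x = 0).
Proof.
move=> Bf; split=> [f0 x|f0].
  by apply/eqP; rewrite -normr_le0 -(mulr0 (supnorm (K^~ x))) -f0 normB_eval_le.
have -> : f = (fun x => 0 * f x) by apply: funext => x; rewrite f0 mul0r.
by rewrite normBZ ?normr0 ?mul0r.
Qed.

Lemma cintegral_sub_le (mu nu : signed_measure X R) g : C0 g ->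
  `|cintegral mu g - cintegral nu g| <=
  normB K (fun x => fmu K mu x - fmu K nu x) * supnorm g.
Proof.
move=> Cg; have [rho [fmu_rho cint_rho]] := charge_lincomb nu mu (-1).
have -> : (fun x => fmu K mu x - fmu K nu x) = fmu K rho.
  by rewrite fmu_rho; apply: funext => x; rewrite mulN1r addrC.
have -> : cintegral mu g - cintegral nu g = cintegral rho g.
  by rewrite cint_rho // mulN1r addrC.
by rewrite normB_fmu mulrC; exact/cintegral_le/C0_bounded_measurable.
Qed.

Section cauchy.
Variable mu : nat -> signed_measure X R.
Hypothesis mu_cauchy : forall e, 0 < e -> exists N, forall n m,
  (N <= n)%N -> (N <= m)%N -> normB K (fun x => fmu K (mu n) x - fmu K (mu m) x) <= e.

Lemma cvg_cintegral_cauchy g : C0 g -> cvg ((fun n => cintegral (mu n) g) @ \oo).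
Proof.
move=> Cg; apply: cvg_cauchy_le => e e_gt0.
have s_ge0 := supnorm_ge0 (C0_bounded_measurable Cg).
have [N le_e] := mu_cauchy (divr_gt0 e_gt0 (ltr_wpDl s_ge0 ltr01)).
exists N => n m Nn Nm; apply: le_trans (cintegral_sub_le _ _ Cg) _.
apply: le_trans (ler_wpM2r s_ge0 (le_e n m Nn Nm)) _.
by rewrite mulrAC ler_pdivrMr ?ltr_wpDl // ler_wpM2l ?ltW //; lra.
Qed.

Lemma cauchy_limit_charge : exists rho : signed_measure X R,
  forall g, C0 g -> (fun n => cintegral (mu n) g) @ \oo --> cintegral rho g.
Proof.
have [rho rhoE] : exists rho : signed_measure X R, forall g, C0 g ->
    lim ((fun n => cintegral (mu n) g) @ \oo) = cintegral rho g.
  apply: Riesz_surj.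
    move=> b g h Cg Ch; apply: cvg_lim => //.
    have -> : (fun n => cintegral (mu n) (fun t => b * g t + h t)) =
        (fun n => b * cintegral (mu n) g + cintegral (mu n) h).
      by apply: funext => n; rewrite cintegral_lin //; exact: C0_bounded_measurable.
    apply: cvgD; last exact: cvg_cintegral_cauchy.
    by apply: cvgMl_tmp; exact: cvg_cintegral_cauchy.
  have [N le_1] := mu_cauchy ltr01.
  exists (tvnorm (mu N) + 1) => g Cg.
  apply: (cvg_norm_le (N := N) (cvg_cintegral_cauchy Cg)) => n Nn.
  have s_ge0 := supnorm_ge0 (C0_bounded_measurable Cg).
  have := cintegral_le (mu N) (C0_bounded_measurable Cg).
  have := ler_wpM2r s_ge0 (le_1 n N Nn (leqnn N)).
  have := cintegral_sub_le (mu n) (mu N) Cg.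
  have := ler_normD (cintegral (mu N) g) (cintegral (mu n) g - cintegral (mu N) g).
  by rewrite addrC subrK mulrDl mul1r; lra.
by exists rho => g Cg; rewrite -rhoE //; exact: cvg_cintegral_cauchy.
Qed.

Lemma normB_cauchy_cvg (rho : signed_measure X R) :
  (forall g, C0 g -> (fun n => cintegral (mu n) g) @ \oo --> cintegral rho g) ->
  (fun n => normB K (fun x => fmu K (mu n) x - fmu K rho x)) @ \oo --> 0.
Proof.
move=> mu_rho; apply/cvgrPdist_le => e e_gt0; have [N le_e] := mu_cauchy e_gt0.
exists N => // n Nn /=; rewrite sub0r normrN ger0_norm ?normB_ge0 //.
have [sig [fmu_sig cint_sig]] := charge_lincomb rho (mu n) (-1).
have -> : (fun x => fmu K (mu n) x - fmu K rho x) = fmu K sig.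
  by rewrite fmu_sig; apply: funext => x; rewrite mulN1r addrC.
rewrite normB_fmu; apply: tvnorm_le => g Cg g1.
rewrite cint_sig // mulN1r addrC.
apply: (cvg_norm_le (N := N) (a := fun m => cintegral (mu n) g - cintegral (mu m) g)).
  by apply: cvgB; [exact: cvg_cst | exact: mu_rho].
move=> m Nm; apply: le_trans (cintegral_sub_le _ _ Cg) _.
rewrite -[e]mulr1 ler_pM ?normB_ge0 ?le_e // supnorm_ge0 //.
exact: C0_bounded_measurable.
Qed.

End cauchy.

Lemma inB_complete (u : nat -> X -> R) : (forall n, inB K (u n)) ->
  (forall e : R, 0 < e -> exists N : nat, forall n m : nat,
     (N <= n)%N -> (N <= m)%N -> normB K (fun x => u n x - u m x) <= e) ->
  exists f, inB K f /\ (fun n => normB K (fun x => u n x - f x)) @ \oo --> 0.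
Proof.
move=> Bu u_cauchy.
have /choice [mu uE] : forall n, exists mu, u n = fmu K mu.
  by move=> n; have [mu ->] := Bu n; exists mu.
have {}uE : u = fun n => fmu K (mu n) by apply: funext.
subst u; have [rho mu_rho] := cauchy_limit_charge u_cauchy.
by exists (fmu K rho); split; [exists rho | exact: normB_cauchy_cvg].
Qed.

End kernel.

Theorem proposition2p1 (R : realType) (X : tvsType R) (K : X -> X -> R)
  (Riesz_inj : forall mu nu : signed_measure X R,
      (forall g, C0 g -> cintegral mu g = cintegral nu g) ->
      forall A : set (borelT X), measurable A -> mu A = nu A)
  (Riesz_surj : forall T : (X -> R) -> R,
      (forall a g h, C0 g -> C0 h ->
         T (fun t => a * g t + h t) = a * T g + T h) ->
      (exists C : R, forall g, C0 g -> `|T g| <= C * supnorm g) ->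
      exists mu : signed_measure X R, forall g, C0 g -> T g = cintegral mu g)
  (Riesz_isom : forall mu : signed_measure X R,
      sup [set `|cintegral mu g| | g in [set g | C0 g /\ supnorm g <= 1]]
      = tvnorm mu)
  (Knonsing : forall (m : nat) (xs : 'I_m -> X), injective xs ->
      (\matrix_(j < m, k < m) K (xs k) (xs j)) \in unitmx)
  (KC0 : forall x, C0 (fun t => K t x))
  (Kdense : forall g, C0 g -> forall e : R, 0 < e ->
      exists (n : nat) (c : 'I_n -> R) (xs : 'I_n -> X),
        supnorm (fun t => g t - \sum_(i < n) c i * K t (xs i)) <= e) :
  (forall mu nu : signed_measure X R, fmu K mu = fmu K nu -> tvnorm mu = tvnorm nu)
  /\ inB K (fun _ => 0)
  /\ (forall (a : R) f g, inB K f -> inB K g -> inB K (fun x => a * f x + g x))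
  /\ (forall f g, inB K f -> inB K g ->
        normB K (fun x => f x + g x) <= normB K f + normB K g)
  /\ (forall (a : R) f, inB K f -> normB K (fun x => a * f x) = `|a| * normB K f)
  /\ (forall f, inB K f -> 0 <= normB K f)
  /\ (forall u : nat -> X -> R, (forall n, inB K (u n)) ->
        (forall e : R, 0 < e -> exists N : nat, forall n m : nat,
           (N <= n)%N -> (N <= m)%N -> normB K (fun x => u n x - u m x) <= e) ->
        exists f, inB K f /\
          (fun n => normB K (fun x => u n x - f x)) @ \oo --> (0 : R))
  /\ (forall x : X, exists C : R, forall f, inB K f -> `|f x| <= C * normB K f)
  /\ (forall f, inB K f -> (normB K f = 0 <-> forall x, f x = 0)).
Proof.
split; first exact: tvnorm_fmu_eq.
split; first exact: inB0.
split; first exact: inB_lin.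
split; first exact: normBD.
split; first exact: normBZ.
split; first by move=> f _; exact: normB_ge0.
split; first exact: inB_complete.
split; first by move=> x; exists (supnorm (K^~ x)) => f; exact: normB_eval_le.
exact: normB_eq0.
Qed.
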